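(* Let $f\in P_{n,2k}$ be nonnegative on $\mathbb R^n$ and suppose $f(Ax)=f(x)$ for all $A\in J(n,v)$, for some $v\in\mathbb R^n$. Then $f$ is a sum of squares of forms (of degree $k$).
   Context: $P_{n,2k}$ is the space of real forms of degree $2k$ in $n$ variables. $J(n,v)=\{A\in SO(n):Av=v\}$. *)

From mathcomp Require Import all_boot all_order all_algebra.
From mathcomp Require Import reals.
From mathcomp Require Export mpoly.
Set Implicit Arguments. Unset Strict Implicit. Unset Printing Implicit Defensive.
Import Order.TTheory GRing.Theory Num.Theory.
Local Open Scope ring_scope.

Definition evalv (R : realType) (n : nat) (p : {mpoly R[n]}) (x : 'cV[R]_n) : R :=
  p.@[fun i => x i 0].

Definition is_form (R : realType) (n d : nat) (p : {mpoly R[n]}) : bool :=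
  p \is [in R[n], d.-homog].

Definition SO (R : realType) (n : nat) : pred 'M[R]_n :=
  fun A => (A *m A^T == 1%:M) && (\det A == 1).

Definition J (R : realType) (n : nat) (v : 'cV[R]_n) : pred 'M[R]_n :=
  fun A => SO A && (A *m v == v).

Definition sos_of_forms (R : realType) (n k : nat) (f : {mpoly R[n]}) : Prop :=
  exists s : seq {mpoly R[n]},
    (forall g, g \in s -> is_form k g) /\
    f = \sum_(g <- s) g ^+ 2.

(* Let u be a unit vector along v, t = u.x and s = |x|^2 - t^2. For n >= 3 the
   stabiliser of u in SO(n) acts transitively on each set {|x|^2 = c, u.x = t}
   (products of two Householder reflections suffice), so an invariant form
   satisfies f(x) = t^(2k) P(sqrt s / t), where P(a) = f(a w + u) for a unit w
   orthogonal to u. P is even, nonnegative and of degree at most 2k, hence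
   P = q1^2 + q2^2 with deg qj <= k. Writing qj(a) = Ej(a^2) + a Oj(a^2) and
   s = sum_l (x_l - u_l t)^2, the identity
     f = sum_j (t^k Ej(s/t^2))^2 + sum_(j,l) ((x_l - u_l t) t^(k-1) Oj(s/t^2))^2
   exhibits f as a sum of squares of k-forms. For n <= 2 no invariance is needed:
   a nonnegative binary form is y^(2k) P(x/y) with P = q1^2 + q2^2. *)

From mathcomp Require Import all_boot all_order all_algebra.
From mathcomp Require Import reals mpoly complex ring zify.
From mathcomp Require polyrcf.
Set Implicit Arguments. Unset Strict Implicit. Unset Printing Implicit Defensive.
Import Order.TTheory GRing.Theory Num.Theory.
Local Open Scope ring_scope.

Section NonnegUnivariate.
Variable R : rcfType.
Implicit Types (p q r s : {poly R}) (a b c x : R).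

Lemma poly_ge0_right p c : (forall x, c < x -> 0 <= p.[x]) -> 0 <= p.[c].
Proof.
move=> p_ge0; rewrite leNgt; apply/negP => pc_lt0.
have npc_gt0 : 0 < - p.[c] by rewrite oppr_gt0.
have [e e_gt0 near_c] := polyrcf.poly_cont c p npc_gt0.
have he_gt0 : 0 < e / 2 by rewrite divr_gt0.
have := near_c (c + e / 2); rewrite addrC addKr ger0_norm ?ltW //.
rewrite ltr_pdivrMr // ltr_pMr // ltr1n => /(_ isT) /(le_lt_trans (ler_norm _)).
rewrite ltrBlDr addNr; apply/negP; rewrite -leNgt.
by apply: p_ge0; rewrite ltrDl.
Qed.

Lemma poly_ge0_left p c : (forall x, x < c -> 0 <= p.[x]) -> 0 <= p.[c].
Proof.
move=> p_ge0; have -> : p.[c] = (p \Po - 'X).[- c].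
  by rewrite horner_comp hornerN hornerX opprK.
by apply: poly_ge0_right => x; rewrite horner_comp hornerN hornerX ltrNl => /p_ge0.
Qed.

Lemma poly_ge0_double_root p a : (forall x, 0 <= p.[x]) -> root p a ->
  exists q, p = q * ('X - a%:P) ^+ 2.
Proof.
move=> p_ge0 /factor_theorem [q pE]; subst p.
suff /factor_theorem [r ->] : root q a by exists r; rewrite -mulrA -expr2.
rewrite /root eq_le; apply/andP; split; last first.
  apply: poly_ge0_right => x ax; have := p_ge0 x.
  by rewrite hornerM hornerXsubC pmulr_lge0 // subr_gt0.
rewrite -oppr_ge0 -hornerN; apply: poly_ge0_left => x xa; have := p_ge0 x.
by rewrite hornerM hornerXsubC hornerN -mulrNN pmulr_lge0 // oppr_gt0 subr_lt0.
Qed.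

Lemma conj_roots_quadratic_factor p a b : b != 0 ->
  root (map_poly (real_complex R) p) (a +i* b)%C ->
  exists q, p = q * (('X - a%:P) ^+ 2 + (b ^+ 2)%:P).
Proof.
move=> b_neq0 pz0; set z := (a +i* b)%C.
have pzc0 : root (map_poly (real_complex R) p) z^*%C.
  rewrite -complex_root_conj -map_poly_comp.
  by rewrite (eq_map_poly (fun x => conjc_real x)).
have z_neq_zc : z != z^*%C.
  apply/eqP => -[] /eqP; rewrite -addr_eq0 -mulr2n mulrn_eq0 /=.
  exact/negP.
have roots_z : all (root (map_poly (real_complex R) p)) [:: z; z^*%C].
  by rewrite /= pz0 pzc0.
have uniq_z : uniq_roots [:: z; z^*%C] by rewrite uniq_rootsE /= inE z_neq_zc.
have [qC pE] := uniq_roots_prod_XsubC roots_z uniq_z.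
have QE : map_poly (real_complex R) (('X - a%:P) ^+ 2 + (b ^+ 2)%:P) =
    \prod_(w <- [:: z; z^*%C]) ('X - w%:P).
  rewrite !big_cons big_nil mulr1 rmorphD rmorphXn rmorphB /= map_polyX !map_polyC /=.
  set ib := (0 +i* b)%C.
  have -> : z = (a%:C + ib)%C by rewrite /z /ib; simpc.
  have -> : (a -i* b)%C = (a%:C - ib)%C by rewrite /ib; simpc.
  have ib2 : (ib ^+ 2 = - (b ^+ 2)%:C)%C by rewrite /ib expr2; simpc; rewrite expr2.
  have -> : (((b ^+ 2)%:C)%C)%:P = - (ib ^+ 2)%:P by rewrite ib2 polyCN opprK.
  rewrite !polyCD polyCN rmorphXn.
  by ring.
have /dvdpP [q ->] : ('X - a%:P) ^+ 2 + (b ^+ 2)%:P %| p.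
  by rewrite -(dvdp_map (real_complex R)) QE pE dvdp_mull.
by exists q.
Qed.

Lemma poly_ge0_quadratic_factor p : (forall x, 0 <= p.[x]) -> (1 < size p)%N ->
  exists a b q, p = q * (('X - a%:P) ^+ 2 + (b ^+ 2)%:P) /\ forall x, 0 <= q.[x].
Proof.
move=> p_ge0 p_gt1.
have [a [b [q pE]]] : exists a b q, p = q * (('X - a%:P) ^+ 2 + (b ^+ 2)%:P).
  have /closed_rootP [[a b] pz0] : size (map_poly (real_complex R) p) != 1%N.
    by rewrite size_map_poly gtn_eqF.
  exists a, b; have [b0|b_neq0] := eqVneq b 0; last first.
    exact: conj_roots_quadratic_factor pz0.
  have /(poly_ge0_double_root p_ge0) [q ->] : root p a.
    by move: pz0; rewrite b0 /root -[(a +i* 0)%C]/(a%:C)%C horner_map /= => /eqP [->].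
  by exists q; rewrite b0 expr0n addr0.
exists a, b, q; split => //.
have q_ge0 y : y != a -> 0 <= q.[y].
  move=> y_neq_a; have := p_ge0 y; rewrite pE hornerM pmulr_lge0 //.
  rewrite hornerD horner_exp hornerXsubC hornerC ltr_wpDr ?sqr_ge0 //.
  by rewrite exprn_even_gt0 //= subr_eq0.
move=> x; have [->|] := eqVneq x a; last exact: q_ge0.
by apply: poly_ge0_right => y ay; rewrite q_ge0 // gt_eqF.
Qed.

Lemma poly_ge0_size_le1_sum_two_squares d p :
  (size p <= 1)%N -> (forall x, 0 <= p.[x]) ->
  exists r s, [/\ p = r ^+ 2 + s ^+ 2, (size r <= d.+1)%N & (size s <= d.+1)%N].
Proof.
move=> /size1_polyC pE p_ge0; exists (Num.sqrt p`_0)%:P, 0.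
rewrite size_polyC size_poly0 (leq_trans (leq_b1 _)) // expr0n addr0.
by rewrite -rmorphXn /= sqr_sqrtr -?pE // -horner_coef0.
Qed.

Lemma size_mulXsubC_addCmul r s a c n : (size r <= n)%N -> (size s <= n)%N ->
  (size (r * ('X - a%:P) + c%:P * s)%R <= n.+1)%N.
Proof.
move=> r_size s_size; apply: leq_trans (size_polyD _ _) _; rewrite geq_max.
have := size_polyMleq r ('X - a%:P); rewrite size_XsubC mul_polyC.
by have := size_scale_leq c s; lia.
Qed.

Lemma poly_ge0_sum_two_squares d p :
  (size p <= (2 * d).+1)%N -> (forall x, 0 <= p.[x]) ->
  exists r s, [/\ p = r ^+ 2 + s ^+ 2, (size r <= d.+1)%N & (size s <= d.+1)%N].
Proof.
(* for d = 0 the bound (2 * 0).+1 on size p is already 1 *)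
elim: d p => [|d IH] p p_size p_ge0; have [p_le1|p_gt1] := leqP (size p) 1;
  try exact: poly_ge0_size_le1_sum_two_squares.
have [a [b [q [pE q_ge0]]]] := poly_ge0_quadratic_factor p_ge0 p_gt1.
set Q := ('X - a%:P) ^+ 2 + (b ^+ 2)%:P in pE.
have Q_size : size Q = 3%N.
  by rewrite size_polyDl size_exp_XsubC // (leq_ltn_trans (size_polyC_leq1 _)).
have Q_neq0 : Q != 0 by rewrite -size_poly_eq0 Q_size.
have q_neq0 : q != 0 by apply: contraTneq p_gt1 => q0; rewrite pE q0 mul0r size_poly0.
have q_size : (size q <= (2 * d).+1)%N.
  move: p_size; rewrite pE size_mul // Q_size.
  by rewrite addnS /= mulnS -addnS addnC leq_add2l.
have [r [s [qE r_size s_size]]] := IH q q_size q_ge0.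
(* (r^2 + s^2) ((X - a)^2 + b^2) is a sum of two squares (Brahmagupta-Fibonacci) *)
exists (r * ('X - a%:P) + (- b)%:P * s), (s * ('X - a%:P) + b%:P * r).
split; try exact: size_mulXsubC_addCmul.
by rewrite pE qE /Q polyCN rmorphXn /=; ring.
Qed.

End NonnegUnivariate.

Lemma sum_digits_inj N n (f g : 'I_n -> nat) :
  (forall i, f i < N)%N -> (forall i, g i < N)%N ->
  (\sum_(i < n) N ^ i * f i = \sum_(i < n) N ^ i * g i)%N -> f =1 g.
Proof.
elim: n f g => [|n IH] f g f_lt g_lt; first by move=> _ [].
have N_gt0 : (0 < N)%N by have := f_lt ord0; case: (N).
have shift h : (\sum_(i < n) N ^ bump 0 i * h (lift ord0 i) =
    N * \sum_(i < n) N ^ i * h (lift ord0 i))%N.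
  by rewrite big_distrr; apply: eq_bigr => i _; rewrite /bump /= add1n expnS mulnA.
rewrite !big_ord_recl !expn0 !mul1n !shift => fg.
have fg0 : f ord0 = g ord0.
  move: (congr1 (modn^~ N) fg); rewrite !(addnC (_ ord0)) !(mulnC N) !modnMDl.
  by rewrite !modn_small.
move: fg; rewrite fg0 => /addnI /eqP; rewrite eqn_pmul2l // => /eqP fg.
have {}IH := IH _ _ (fun i => f_lt (lift ord0 i)) (fun i => g_lt (lift ord0 i)) fg.
by move=> i; case: (unliftP ord0 i) => [j ->|->].
Qed.

Section MPolyEval.
Variable R : numDomainType.

Lemma poly_eq0_horner (q : {poly R}) : (forall t, q.[t] = 0) -> q = 0.
Proof.
move=> q0; apply/eqP/negPn/negP => q_neq0.
pose rs := [seq i%:R | i <- iota 0 (size q)] : seq R.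
have rs_uniq : uniq rs.
  by rewrite map_inj_uniq ?iota_uniq // => i j /eqP; rewrite eqr_nat => /eqP.
have rs_roots : all (root q) rs by apply/allP => x _; apply/eqP/q0.
by have := max_poly_roots q_neq0 rs_roots rs_uniq; rewrite size_map size_iota ltnn.
Qed.

Lemma mpoly_eq0_meval n (p : {mpoly R[n]}) : (forall x, p.@[x] = 0) -> p = 0.
Proof.
(* Kronecker substitution x_i := t ^+ (N ^ i), with N above every exponent of p,
   sends distinct monomials of p to distinct powers of t. *)
move=> p0; pose N := msize p.
pose e (m : 'X_{1..n}) := (\sum_(i < n) N ^ i * m i)%N.
pose q : {poly R} := \sum_(m <- msupp p) p@_m *: 'X^(e m).
have q0 : q = 0.
  apply: poly_eq0_horner => t; rewrite -(p0 (fun i => t ^+ (N ^ i))) mevalE.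
  rewrite horner_sum; apply: eq_bigr => m _; rewrite hornerZ hornerXn -prodrXr.
  by congr (_ * _); apply: eq_bigr => i _; rewrite exprM.
have m_lt m : m \in msupp p -> forall i, (m i < N)%N.
  move=> /msize_mdeg_lt m_lt i; apply: leq_ltn_trans m_lt.
  by rewrite mdegE (bigD1 i) //= leq_addr.
apply/mpolyP => m0; rewrite mcoeff0.
have [m0_supp|] := boolP (m0 \in msupp p); last exact: memN_msupp_eq0.
have := congr1 (fun r : {poly R} => r`_(e m0)) q0; rewrite coef0 coef_sum.
rewrite (bigD1_seq m0) ?msupp_uniq //= coefZ coefXn eqxx mulr1 big1 ?addr0 //.
move=> m m_neq; rewrite coefZ coefXn.
have [m_supp|] := boolP (m \in msupp p); last by move/memN_msupp_eq0 ->; rewrite mul0r.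
case: eqP; rewrite ?mulr0 // => /(sum_digits_inj (m_lt _ m0_supp) (m_lt _ m_supp)).
by move/mnmP => m0m; rewrite m0m eqxx in m_neq.
Qed.

Lemma mpoly_eq_meval_nonzero n (h p q : {mpoly R[n]}) : h != 0 ->
  (forall x, h.@[x] != 0 -> p.@[x] = q.@[x]) -> p = q.
Proof.
move=> h_neq0 pq; apply/eqP; rewrite -subr_eq0.
suff /eqP : h * (p - q) = 0 by rewrite mulf_eq0 (negPf h_neq0).
apply: mpoly_eq0_meval => x; rewrite mevalM mevalB.
by have [->|/pq ->] := eqVneq h.@[x] 0; rewrite ?mul0r ?subrr ?mulr0.
Qed.

End MPolyEval.

Lemma size_prod_leq (R : nzSemiRingType) I (r : seq I) (F : I -> {poly R}) :
  (size (\prod_(j <- r) F j)%R <= (\sum_(j <- r) (size (F j)).-1).+1)%N.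
Proof.
elim: r => [|a r IH]; first by rewrite !big_nil size_poly1.
rewrite !big_cons; apply: leq_trans (size_polyMleq _ _) _.
by move: IH; set s := size _; set t := size (F a); lia.
Qed.

Lemma leq_mul_pred w j s d : (j < s)%N -> (w * s.-1 <= d)%N -> (w * j <= d)%N.
Proof. nia. Qed.

Section Homogeneous.
Variables (R : comNzRingType) (n : nat).
Implicit Types (f : {mpoly R[n]}) (x w u : 'I_n -> R).

Lemma dhomog_mevalZ d f c x :
  f \is d.-homog -> f.@[fun i => c * x i] = c ^+ d * f.@[x].
Proof.
move=> /dhomogP f_homog; rewrite !mevalE big_distrr /=.
apply: eq_big_seq => m m_supp; rewrite mulrCA -(f_homog m m_supp).
have -> : c ^+ mdeg m = \prod_(i < n) c ^+ m i by rewrite prodrXr (mdegE m).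
by rewrite -big_split; congr (_ * _); apply: eq_bigr => i _; rewrite exprMn.
Qed.

Lemma dhomogXU (i : 'I_n) : ('X_i : {mpoly R[n]}) \is 1.-homog.
Proof. by rewrite dhomogX; apply/eqP; exact: mdeg1. Qed.

Lemma mpolyXU_neq0 (i : 'I_n) : ('X_i : {mpoly R[n]}) != 0.
Proof. by rewrite -msupp_eq0 msuppX. Qed.

Definition line_poly f w u : {poly R} :=
  \sum_(m <- msupp f) f@_m *: \prod_(i < n) (w i *: 'X + (u i)%:P) ^+ m i.

Lemma horner_line_poly f w u a : (line_poly f w u).[a] = f.@[fun i => a * w i + u i].
Proof.
rewrite mevalE horner_sum; apply: eq_bigr => m _; rewrite hornerZ horner_prod.
congr (_ * _); apply: eq_bigr => i _.
by rewrite horner_exp hornerD hornerZ hornerX hornerC mulrC.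
Qed.

Lemma size_line_poly d f w u : f \is d.-homog -> (size (line_poly f w u) <= d.+1)%N.
Proof.
move=> /dhomogP f_homog; apply: leq_trans (size_sum _ _ _) _.
apply/bigmax_leqP_seq => m m_supp _; apply: leq_trans (size_scale_leq _ _) _.
have := f_homog m m_supp => /(etrans (esym (mdegE m))) <-.
apply: leq_trans (size_prod_leq _ _) _; rewrite ltnS.
apply: leq_sum => i _; have := size_poly_exp_leq (w i *: 'X + (u i)%:P) (m i).
have : (size (w i *: 'X + (u i)%:P)%R <= 2)%N.
  apply: leq_trans (size_polyD _ _) _; rewrite geq_max (leq_trans (size_polyC_leq1 _)) //.
  by rewrite (leq_trans (size_scale_leq _ _)) ?size_polyX.
by set s := size (w i *: 'X + (u i)%:P)%R; set t := size _; nia.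
Qed.

Definition homogenize (q : {poly R}) (Y T : {mpoly R[n]}) (w d : nat) : {mpoly R[n]} :=
  \sum_(j < size q) q`_j *: (Y ^+ j * T ^+ (d - w * j)).

Lemma dhomog_homogenize (q : {poly R}) (Y T : {mpoly R[n]}) (w d : nat) :
  Y \is w.-homog -> T \is 1.-homog -> (w * (size q).-1 <= d)%N ->
  homogenize q Y T w d \is d.-homog.
Proof.
move=> Y_homog T_homog q_size; apply: rpred_sum => j _; apply: rpredZ.
have wj_le : (w * j <= d)%N := leq_mul_pred (ltn_ord j) q_size.
have := dhomogM (dhomogMn j Y_homog) (dhomogMn (d - w * j) T_homog).
by rewrite mul1n subnKC.
Qed.

End Homogeneous.

Lemma meval_homogenize (R : fieldType) n (q : {poly R}) (Y T : {mpoly R[n]}) w d x :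
  T.@[x] != 0 -> (w * (size q).-1 <= d)%N ->
  (homogenize q Y T w d).@[x] = T.@[x] ^+ d * q.[Y.@[x] / T.@[x] ^+ w].
Proof.
move=> T_neq0 q_size; rewrite horner_coef raddf_sum big_distrr /=.
apply: eq_bigr => j _; rewrite mevalZ mevalM !rmorphXn /=.
have wj_le : (w * j <= d)%N := leq_mul_pred (ltn_ord j) q_size.
by rewrite exprB // ?unitfE ?expf_neq0 // exprMn exprVn -exprM; ring.
Qed.

Section DotProduct.
Variables (R : realDomainType) (n : nat).
Implicit Types (x y z : 'cV[R]_n).

Definition dot x y : R := \sum_i x i 0 * y i 0.

Lemma dotC x y : dot x y = dot y x.
Proof. by apply: eq_bigr => i _; rewrite mulrC. Qed.

Lemma dotDl x y z : dot (x + y) z = dot x z + dot y z.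
Proof. by rewrite /dot -big_split; apply: eq_bigr => i _; rewrite !mxE mulrDl. Qed.

Lemma dotBl x y z : dot (x - y) z = dot x z - dot y z.
Proof. by rewrite /dot -sumrB; apply: eq_bigr => i _; rewrite !mxE mulrBl. Qed.

Lemma dotZl c x z : dot (c *: x) z = c * dot x z.
Proof. by rewrite /dot big_distrr; apply: eq_bigr => i _; rewrite !mxE /= mulrA. Qed.

Lemma dotDr x y z : dot z (x + y) = dot z x + dot z y.
Proof. by rewrite !(dotC z) dotDl. Qed.

Lemma dotBr x y z : dot z (x - y) = dot z x - dot z y.
Proof. by rewrite !(dotC z) dotBl. Qed.

Lemma dotZr c x z : dot z (c *: x) = c * dot z x.
Proof. by rewrite !(dotC z) dotZl. Qed.

Lemma dot_ge0 x : 0 <= dot x x.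
Proof. by apply: sumr_ge0 => i _; rewrite -expr2 sqr_ge0. Qed.

Lemma dot_eq0 x : (dot x x == 0) = (x == 0).
Proof.
apply/idP/eqP => [|->]; last by rewrite /dot big1 // => i _; rewrite mxE mul0r.
rewrite psumr_eq0 => [/allP x0|i _]; last by rewrite -expr2 sqr_ge0.
apply/matrixP => i j; rewrite ord1 mxE.
by have := x0 i (mem_index_enum i); rewrite -expr2 sqrf_eq0 => /eqP.
Qed.

Lemma trmx_mul_dot x y : x^T *m y = (dot x y)%:M.
Proof.
rewrite [LHS]mx11_scalar; congr (_%:M).
by rewrite !mxE; apply: eq_bigr => i _; rewrite !mxE.
Qed.

Lemma dot_trmx_mul x y : dot x y = (x^T *m y) 0 0.
Proof. by rewrite trmx_mul_dot mxE eqxx mulr1n. Qed.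

End DotProduct.

Lemma det1_add_mulmx (R : comNzRingType) n (a : 'cV[R]_n) (b : 'rV[R]_n) :
  \det (1%:M + a *m b) = 1 + (b *m a) 0 0.
Proof.
(* factor block_mx 1 (- a) b 1 as lower * upper and as upper * lower triangular *)
pose M := block_mx 1%:M (- a) b (1%:M : 'M_1).
have ML : M = block_mx 1%:M 0 b 1%:M *m block_mx 1%:M (- a) 0 (1%:M + b *m a).
  rewrite mulmx_block !(mul1mx, mul0mx, mulmx1, mulmx0, addr0, add0r, mulmxN).
  by rewrite addrCA addNr addr0.
have MR : M = block_mx (1%:M + a *m b) (- a) 0 1%:M *m block_mx 1%:M 0 b 1%:M.
  by rewrite mulmx_block !(mul1mx, mul0mx, mulmx1, mulmx0, addr0, add0r, mulNmx) addrK.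
have := congr1 determinant ML; rewrite {1}MR !det_mulmx.
by rewrite det_ublock det_lblock det_ublock !det1 !mul1r !mulr1 det_mx11 !mxE /= => ->.
Qed.

Section Reflections.
Variables (R : realFieldType) (n : nat).
Implicit Types (x w : 'cV[R]_n).

Definition householder w : 'M[R]_n := 1%:M - (2 / dot w w) *: (w *m w^T).

Lemma householder_mul w x : householder w *m x = x - (2 * dot w x / dot w w) *: w.
Proof.
rewrite mulmxBl mul1mx -scalemxAl -mulmxA trmx_mul_dot mul_mx_scalar scalerA.
by rewrite mulrAC.
Qed.

Lemma trmx_householder w : (householder w)^T = householder w.
Proof. by rewrite /householder linearB /= trmx1 linearZ /= trmx_mul trmxK. Qed.

Lemma householderK w : w != 0 -> householder w *m householder w = 1%:M.
Proof.
rewrite -dot_eq0 => ww_neq0; set P := w *m w^T; set c := 2 / dot w w.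
have PP : P *m P = dot w w *: P.
  by rewrite mulmxA -(mulmxA w) trmx_mul_dot mul_mx_scalar -scalemxAl.
have cc : c * c * dot w w = c + c by rewrite /c; field.
rewrite mulmxBl mul1mx mulmxBr mulmx1 -scalemxAl -scalemxAr PP !scalerA cc.
by apply/matrixP => i j; rewrite !mxE /c; ring.
Qed.

Lemma det_householder w : w != 0 -> \det (householder w) = -1.
Proof.
rewrite -dot_eq0 => ww_neq0.
rewrite /householder -scaleNr scalemxAr det1_add_mulmx -scalemxAl mxE.
by rewrite (trmx_mul_dot w w) mxE eqxx mulr1n; field.
Qed.

Lemma exists_orthogonal2 u y : (2 < n)%N ->
  exists w, [/\ w != 0, dot w u = 0 & dot w y = 0].
Proof.
move=> n_gt2; pose K := kermx (row_mx u y).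
have K_neq0 : K != 0.
  rewrite -mxrank_eq0 mxrank_ker; have := rank_leq_col (row_mx u y); lia.
have [i Ki_neq0] : exists i, row i K != 0.
  apply/existsP; apply: contraR K_neq0 => /existsPn Ki0; apply/eqP/row_matrixP => i.
  by rewrite row0; apply/eqP; have := Ki0 i; rewrite negbK.
have : row i K *m row_mx u y = 0 by rewrite -row_mul mulmx_ker row0.
rewrite mul_mx_row -row_mx0 => /eq_row_mx [Ku Ky].
by exists (row i K)^T; rewrite trmx_eq0 Ki_neq0 !dot_trmx_mul trmxK Ku Ky !mxE.
Qed.

End Reflections.

Section Rotations.
Variables (R : realType) (n : nat).
Implicit Types (x y u w : 'cV[R]_n).

Lemma SO1 : SO (1%:M : 'M[R]_n).
Proof. by rewrite /SO trmx1 mulmx1 det1 !eqxx. Qed.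

Lemma SO_householderM w1 w2 : w1 != 0 -> w2 != 0 ->
  SO (householder w1 *m householder w2).
Proof.
move=> w1_neq0 w2_neq0; rewrite /SO trmx_mul !trmx_householder -mulmxA.
rewrite (mulmxA (householder w2)) householderK // mul1mx householderK //.
by rewrite det_mulmx !det_householder // mulrNN mulr1 !eqxx.
Qed.

Lemma exists_SO_fix_map u x y : (2 < n)%N ->
  dot x x = dot y y -> dot u x = dot u y ->
  exists A : 'M[R]_n, [/\ SO A, A *m u = u & A *m x = y].
Proof.
(* The reflection along d = x - y swaps x and y and fixes u, as d is orthogonal
   to u; a second reflection, fixing u and y, restores the determinant. *)
move=> n_gt2 xx_yy ux_uy.
have [<-|x_neq_y] := eqVneq x y; first by exists 1%:M; rewrite SO1 !mul1mx.
set d := x - y; have d_neq0 : d != 0 by rewrite subr_eq0.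
have [w [w_neq0 wu wy]] := exists_orthogonal2 u y n_gt2.
exists (householder w *m householder d); split; first exact: SO_householderM.
  have du : dot d u = 0 by rewrite dotBl !(dotC _ u) ux_uy subrr.
  rewrite -mulmxA (householder_mul d) du !(mulr0, mul0r, scale0r, subr0).
  by rewrite householder_mul wu !(mulr0, mul0r, scale0r, subr0).
have dxd : 2 * dot d x / dot d d = 1.
  have dd : dot d d = 2 * dot d x by rewrite !(dotBl, dotBr) xx_yy (dotC x y); ring.
  by rewrite -dd divff // dot_eq0.
rewrite -mulmxA (householder_mul d) dxd scale1r opprB addrC subrK.
by rewrite householder_mul wy !(mulr0, mul0r, scale0r, subr0).
Qed.

Definition normalize z : 'cV[R]_n := (Num.sqrt (dot z z))^-1 *: z.

Lemma dot_normalize z : z != 0 -> dot (normalize z) (normalize z) = 1.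
Proof.
rewrite -dot_eq0 => zz_neq0; have zz_gt0 : 0 < dot z z by rewrite lt_def zz_neq0 dot_ge0.
by rewrite dotZl dotZr mulrA -expr2 exprVn sqr_sqrtr ?ltW // mulVf.
Qed.

End Rotations.

Section Evalv.
Variables (R : realType) (n : nat).
Implicit Types (f g h : {mpoly R[n]}) (x w u : 'cV[R]_n).

Lemma evalvZ_dhomog d f c x : f \is d.-homog -> evalv f (c *: x) = c ^+ d * evalv f x.
Proof. by move=> /(dhomog_mevalZ c) <-; apply: meval_eq => i; rewrite mxE. Qed.

Lemma horner_line_poly_evalv f w u a :
  (line_poly f (fun i => w i 0) (fun i => u i 0)).[a] = evalv f (a *: w + u).
Proof. by rewrite horner_line_poly; apply: meval_eq => i; rewrite !mxE. Qed.

Lemma sos_of_forms_evalv k h f (s : seq {mpoly R[n]}) :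
  h != 0 -> (forall g, g \in s -> is_form k g) ->
  (forall x, evalv h x != 0 -> evalv f x = \sum_(g <- s) evalv g x ^+ 2) ->
  sos_of_forms k f.
Proof.
move=> h_neq0 s_forms fE; exists s; split => //.
apply: (mpoly_eq_meval_nonzero h_neq0) => x.
have col_x p : evalv p (\col_i x i) = p.@[x] by apply: meval_eq => i; rewrite mxE.
rewrite -!col_x => /fE ->; rewrite /evalv rmorph_sum /=.
by apply: eq_bigr => g _; rewrite rmorphXn.
Qed.

End Evalv.

Lemma sos_of_forms_binary (R : realType) n k (f Y T : {mpoly R[n]}) (w u : 'cV[R]_n) :
  is_form (2 * k) f -> (forall x, 0 <= evalv f x) ->
  Y \is 1.-homog -> T \is 1.-homog -> T != 0 ->
  (forall x, x = evalv Y x *: w + evalv T x *: u) -> sos_of_forms k f.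
Proof.
move=> f_form f_ge0 Y_homog T_homog T_neq0 xE.
pose P := line_poly f (fun i => w i 0) (fun i => u i 0).
have P_ge0 a : 0 <= P.[a] by rewrite horner_line_poly_evalv.
have [q1 [q2 [PE q1_size q2_size]]] :=
  poly_ge0_sum_two_squares (size_line_poly _ _ f_form) P_ge0.
have q_deg (q : {poly R}) : (size q <= k.+1)%N -> (1 * (size q).-1 <= k)%N by lia.
apply: (sos_of_forms_evalv (s := [seq homogenize q Y T 1 k | q <- [:: q1; q2]]) T_neq0).
  move=> g /mapP [q]; rewrite !inE => /orP [] /eqP -> ->;
  exact: dhomog_homogenize Y_homog T_homog (q_deg _ _).
move=> x Tx_neq0; set t := evalv T x.
have -> : evalv f x = t ^+ (2 * k) * P.[evalv Y x / t].
  rewrite horner_line_poly_evalv -(evalvZ_dhomog _ _ f_form).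
  by rewrite scalerDr scalerA mulrCA mulfV // mulr1 -xE.
rewrite /P PE /= !big_cons big_nil /evalv !meval_homogenize ?q_deg //.
by rewrite hornerD !horner_exp expr1 mulnC exprM; ring.
Qed.

Lemma horner_even_odd_sqr (R : numFieldType) (q : {poly R}) a :
  (q.[a] ^+ 2 + q.[- a] ^+ 2) / 2 =
  (even_poly q).[a ^+ 2] ^+ 2 + a ^+ 2 * (odd_poly q).[a ^+ 2] ^+ 2.
Proof.
have qE b : q.[b] = (even_poly q).[b ^+ 2] + (odd_poly q).[b ^+ 2] * b.
  by rewrite -{1}(poly_even_odd q) hornerD hornerM hornerX !horner_comp hornerXn.
by rewrite !qE sqrrN; field.
Qed.

Lemma odd_poly_size_le1 (R : nzRingType) (q : {poly R}) : (size q <= 1)%N -> odd_poly q = 0.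
Proof. by move=> /size1_polyC ->; rewrite odd_polyC. Qed.

Lemma double_pred_leq_uphalf e s k : (e <= uphalf s)%N -> (s <= k.+1)%N -> (2 * e.-1 <= k)%N.
Proof. lia. Qed.

Lemma double_pred_leq_half e s k : (e <= s./2)%N -> (s <= k.+1)%N -> (2 * e.-1 <= k.-1)%N.
Proof. lia. Qed.

Section RadialForms.
Variables (R : realType) (n k : nat) (u : 'cV[R]_n).
Hypothesis uu : dot u u = 1.
Implicit Types (x y w : 'cV[R]_n) (q : {poly R}).

Definition coord_form : {mpoly R[n]} := \sum_i u i 0 *: 'X_i.

Definition perp_sqnorm_form : {mpoly R[n]} := \sum_i 'X_i ^+ 2 - coord_form ^+ 2.

Lemma dhomog_coord_form : coord_form \is 1.-homog.
Proof. by apply: rpred_sum => i _; apply: rpredZ; exact: dhomogXU. Qed.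

Lemma dhomog_perp_sqnorm_form : perp_sqnorm_form \is 2.-homog.
Proof.
apply: rpredB; last exact: dhomogMn dhomog_coord_form.
by apply: rpred_sum => i _; exact: dhomogMn (dhomogXU _ i).
Qed.

Lemma evalv_coord_form x : evalv coord_form x = dot u x.
Proof. by rewrite /evalv raddf_sum /=; apply: eq_bigr => i _; rewrite mevalZ mevalXU. Qed.

Lemma evalv_perp_sqnorm_form x :
  evalv perp_sqnorm_form x = dot (x - dot u x *: u) (x - dot u x *: u).
Proof.
rewrite !(dotBl, dotBr, dotZl, dotZr) uu (dotC x u) /evalv mevalB raddf_sum rmorphXn /=.
rewrite -/(evalv _ x) evalv_coord_form.
have -> : \sum_(i < n) ('X_i ^+ 2).@[x^~ 0] = dot x x.
  by apply: eq_bigr => i _; rewrite rmorphXn /= mevalXU expr2.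
by ring.
Qed.

Definition radial_forms q : seq {mpoly R[n]} :=
  homogenize (even_poly q) perp_sqnorm_form coord_form 2 k ::
  [seq ('X_l - u l 0 *: coord_form) *
       homogenize (odd_poly q) perp_sqnorm_form coord_form 2 k.-1 | l <- index_enum 'I_n].

Lemma dhomog_radial_forms q g : (size q <= k.+1)%N -> g \in radial_forms q -> is_form k g.
Proof.
move=> q_size; rewrite inE => /orP [/eqP ->|/mapP [l _ ->]].
  apply: dhomog_homogenize dhomog_perp_sqnorm_form dhomog_coord_form _.
  exact: double_pred_leq_uphalf (size_even_poly q) q_size.
have [k0|k_gt0] := posnP k.
  move: q_size; rewrite k0 => /odd_poly_size_le1 ->.
  by rewrite /homogenize size_poly0 big_ord0 mulr0; exact: dhomog0.
rewrite -(prednK k_gt0) -add1n; apply: dhomogM.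
  by apply: rpredB; [exact: dhomogXU | apply: rpredZ; exact: dhomog_coord_form].
apply: dhomog_homogenize dhomog_perp_sqnorm_form dhomog_coord_form _.
exact: double_pred_leq_half (size_odd_poly q) q_size.
Qed.

Lemma radial_forms_evalv q x a : (size q <= k.+1)%N -> dot u x != 0 ->
  a ^+ 2 * dot u x ^+ 2 = evalv perp_sqnorm_form x ->
  \sum_(g <- radial_forms q) evalv g x ^+ 2 =
  dot u x ^+ (2 * k) * ((q.[a] ^+ 2 + q.[- a] ^+ 2) / 2).
Proof.
move=> q_size t_neq0 sE; rewrite horner_even_odd_sqr big_cons big_map.
have T_neq0 : evalv coord_form x != 0 by rewrite evalv_coord_form.
rewrite /evalv meval_homogenize ?(double_pred_leq_uphalf (size_even_poly q)) //.
rewrite -!/(evalv _ x) evalv_coord_form -sE mulfK ?expf_neq0 //.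
under eq_bigr do rewrite mevalM mevalB mevalZ mevalXU meval_homogenize
  ?(double_pred_leq_half (size_odd_poly q)) // -!/(evalv _ x) evalv_coord_form -sE
  mulfK ?expf_neq0 //.
have sqr_sum : \sum_i (x i 0 - u i 0 * dot u x) ^+ 2 = a ^+ 2 * dot u x ^+ 2.
  rewrite sE evalv_perp_sqnorm_form; apply: eq_bigr => i _.
  by rewrite !mxE expr2 (mulrC (u i 0)).
under eq_bigr do rewrite exprMn; rewrite -big_distrl /= sqr_sum.
have [k0|k_gt0] := posnP k.
  by move: q_size; rewrite k0 => /odd_poly_size_le1 ->; rewrite horner0; ring.
by move: (k.-1) (prednK k_gt0) => j <- /=; rewrite mulnC exprM !(exprS _ j); ring.
Qed.

Lemma sos_of_forms_radial f w :
  is_form (2 * k) f -> (forall x, 0 <= evalv f x) -> dot w w = 1 -> dot w u = 0 ->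
  (forall x y, dot x x = dot y y -> dot u x = dot u y -> evalv f x = evalv f y) ->
  sos_of_forms k f.
Proof.
move=> f_form f_ge0 ww wu f_inv.
have dot_plane b c : dot (b *: w + c *: u) (b *: w + c *: u) = b ^+ 2 + c ^+ 2.
  by rewrite !(dotDl, dotDr, dotZl, dotZr) ww uu wu (dotC u w) wu; ring.
have u_plane b c : dot u (b *: w + c *: u) = c.
  by rewrite dotDr !dotZr uu (dotC u w) wu mulr0 add0r mulr1.
pose P := line_poly f (fun i => w i 0) (fun i => u i 0).
have P_ge0 b : 0 <= P.[b] by rewrite horner_line_poly_evalv.
have P_even b : P.[- b] = P.[b].
  rewrite !horner_line_poly_evalv -[u]scale1r.
  by apply: f_inv; rewrite ?dot_plane ?u_plane // sqrrN.
have [q1 [q2 [PE q1_size q2_size]]] :=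
  poly_ge0_sum_two_squares (size_line_poly _ _ f_form) P_ge0.
have T_neq0 : coord_form != 0.
  by apply: contra_neq (oner_neq0 R) => T0; rewrite -uu -evalv_coord_form T0 /evalv meval0.
apply: (sos_of_forms_evalv (s := radial_forms q1 ++ radial_forms q2) T_neq0).
  by move=> g; rewrite mem_cat => /orP [] /dhomog_radial_forms; apply.
move=> x; rewrite evalv_coord_form => t_neq0.
set t := dot u x; set s := evalv perp_sqnorm_form x.
have sE : s = dot x x - t ^+ 2.
  by rewrite /s /t evalv_perp_sqnorm_form !(dotBl, dotBr, dotZl, dotZr) uu (dotC x u); ring.
have s_ge0 : 0 <= s by rewrite /s evalv_perp_sqnorm_form dot_ge0.
pose a := Num.sqrt s / t.
have a2 : a ^+ 2 * t ^+ 2 = s by rewrite expr_div_n sqr_sqrtr // divfK ?expf_neq0.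
have fx : evalv f x = t ^+ (2 * k) * P.[a].
  rewrite horner_line_poly_evalv -(evalvZ_dhomog _ _ f_form) -[u]scale1r scalerDr !scalerA.
  apply: f_inv; rewrite ?dot_plane ?u_plane ?mulr1 //.
  by rewrite exprMn mulrC a2 sE; ring.
have Pa : P.[a] = (P.[a] + P.[- a]) / 2 by rewrite P_even; field.
rewrite fx Pa big_cat /= (radial_forms_evalv q1_size t_neq0 a2).
rewrite (radial_forms_evalv q2_size t_neq0 a2).
by rewrite /P PE !hornerD !horner_exp; field.
Qed.

End RadialForms.

Section FewVariables.
Variables (R : realType) (k : nat).

Lemma sos_of_forms_nvar0 (f : {mpoly R[0]}) :
  is_form (2 * k) f -> (forall x, 0 <= evalv f x) -> sos_of_forms k f.
Proof.
move=> f_form f_ge0; have fE := nvar0_mpolyC f; set c := f@_0%MM in fE.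
have [f0|f_neq0] := eqVneq f 0; first by exists [::]; rewrite big_nil.
have k0 : k = 0%N by have := dhomog_uniq f_neq0 f_form (nvar0_homog _ f); lia.
have c_ge0 : 0 <= c by have := f_ge0 0; rewrite {1}fE /evalv mevalC.
exists [:: (Num.sqrt c)%:MP]; split.
  by move=> g; rewrite inE k0 => /eqP ->; exact: nvar0_homog.
by rewrite big_seq1 -rmorphXn /= sqr_sqrtr.
Qed.

Lemma sos_of_forms_nvar1 (f : {mpoly R[1]}) :
  is_form (2 * k) f -> (forall x, 0 <= evalv f x) -> sos_of_forms k f.
Proof.
move=> f_form f_ge0.
apply: (sos_of_forms_binary (Y := 0) (T := 'X_0) (w := 0) (u := const_mx 1)) => //.
- exact: dhomog0.
- exact: dhomogXU.
- exact: mpolyXU_neq0.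
move=> x; apply/matrixP => i j; rewrite !ord1 !mxE /evalv mevalXU.
by rewrite meval0 mulr0 add0r mulr1.
Qed.

Lemma sos_of_forms_nvar2 (f : {mpoly R[2]}) :
  is_form (2 * k) f -> (forall x, 0 <= evalv f x) -> sos_of_forms k f.
Proof.
move=> f_form f_ge0.
apply: (sos_of_forms_binary (Y := 'X_0) (T := 'X_1)
  (w := \col_i (i == 0)%:R) (u := \col_i (i == 1)%:R)) => //.
- exact: dhomogXU.
- exact: dhomogXU.
- exact: mpolyXU_neq0.
move=> x; apply/matrixP => i j; rewrite ord1 !mxE /evalv !mevalXU.
case: i => [[|[|//]]] i_lt /=; rewrite ?(mulr0, mulr1, addr0, add0r);
  by congr (x _ _); apply: val_inj.
Qed.

End FewVariables.

Lemma exists_unit_stabilizer_sub_J (R : realType) n (v : 'cV[R]_n.+1) :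
  exists u, dot u u = 1 /\ forall A, SO A -> A *m u = u -> A \in J v.
Proof.
pose e0 : 'cV[R]_n.+1 := const_mx 1.
have e0_neq0 : e0 != 0.
  by apply/eqP => /matrixP /(_ 0 0); rewrite !mxE => /eqP; rewrite oner_eq0.
have [->|v_neq0] := eqVneq v 0.
  exists (normalize e0); split=> [|A SO_A _]; first exact: dot_normalize.
  by rewrite unfold_in /J SO_A mulmx0 eqxx.
exists (normalize v); split=> [|A SO_A]; first exact: dot_normalize.
have c_neq0 : (Num.sqrt (dot v v))^-1 != 0.
  by rewrite invr_eq0 sqrtr_eq0 -ltNge lt_def dot_eq0 v_neq0 dot_ge0.
by rewrite -scalemxAr unfold_in /J SO_A => /(scalerI c_neq0) ->; rewrite eqxx.
Qed.

Unset Implicit Arguments.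

Theorem lemma6p3 (R : realType) (n k : nat) (f : {mpoly R[n]}) (v : 'cV[R]_n) :
  is_form (2 * k) f ->
  (forall x : 'cV[R]_n, 0 <= evalv f x) ->
  (forall A : 'M[R]_n, A \in J v -> forall x : 'cV[R]_n, evalv f (A *m x) = evalv f x) ->
  sos_of_forms k f.
Proof.
case: n f v => [|[|[|n]]] f v f_form f_ge0 f_inv.
- exact: sos_of_forms_nvar0.
- exact: sos_of_forms_nvar1.
- exact: sos_of_forms_nvar2.
have [u [uu u_stab]] := exists_unit_stabilizer_sub_J v.
have [w [w_neq0 wu _]] := exists_orthogonal2 u u (isT : (2 < n.+3)%N).
apply: (sos_of_forms_radial uu f_form f_ge0 (dot_normalize w_neq0)).
  by rewrite dotZl wu mulr0.
move=> x y xx_yy ux_uy.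
have [A [SO_A Au Ax]] := exists_SO_fix_map (isT : (2 < n.+3)%N) xx_yy ux_uy.
by rewrite -Ax f_inv // u_stab.
Qed.
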